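(* Let $(E,\mu)$ and $(F,\nu)$ be fuzzy Riesz spaces and $T:E\rightarrow F$ a fuzzy Riesz homomorphism. (1) If $B$ is a fuzzy ideal in $T(E)$, then $T^{-1}(B)$ is a fuzzy ideal in $E$. (2) If $B_1$ is a fuzzy ideal in $F$, then $T^{-1}(B_1)$ is a fuzzy ideal in $E$.
   Context: A fuzzy order on a real vector space $E$ is a map $\mu:E\times E\to[0,1]$ with $\mu(x,x)=1$; $\mu(x,y)+\mu(y,x)>1$ implies $x=y$; and $\mu(x,z)\ge\sup_{y}\min(\mu(x,y),\mu(y,z))$. Write $x\le y$ for $\mu(x,y)>\frac12$; suprema/infima are taken with respect to this relation. $(E,\mu)$ is a fuzzy ordered linear space if $\mu(x_1,x_2)>\frac12$ implies $\mu(x_1,x_2)\le\mu(x_1+x,x_2+x)$ for all $x$ and $\mu(x_1,x_2)\le\mu(\alpha x_1,\alpha x_2)$ for all $\alpha>0$; it is a fuzzy Riesz space if $x\vee y=\sup\{x,y\}$ and $x\wedge y=\inf\{x,y\}$ exist for all $x,y$. $|x|=x\vee(-x)$. A fuzzy Riesz homomorphism is a linear map with $T(x\vee y)=Tx\vee Ty$; $T(E)$ is a fuzzy Riesz subspace of $F$ with the restricted fuzzy order. A subset $A$ is fuzzy solid if $\mu(|x|,|y|)>\frac12$ and $y\in A$ imply $x\in A$; a fuzzy ideal is a fuzzy solid vector subspace. $T^{-1}(B)=\{x\in E: Tx\in B\}$. *)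

From HB Require Import structures.
From mathcomp Require Import all_boot all_order all_algebra.
From mathcomp Require Import reals.
Set Implicit Arguments. Unset Strict Implicit. Unset Printing Implicit Defensive.
Import Order.TTheory GRing.Theory Num.Theory.
Local Open Scope ring_scope.

Section FuzzyDefs.
Variable R : realType.

(* A fuzzy order mu on E (values in [0,1]). The transitivity condition
   mu(x,z) >= sup_y min(mu(x,y),mu(y,z)) is written pointwise in y. *)
Definition fuzzy_order (E : Type) (mu : E -> E -> R) : Prop :=
  (forall x y, 0 <= mu x y <= 1) /\
  (forall x, mu x x = 1) /\
  (forall x y, mu x y + mu y x > 1 -> x = y) /\
  (forall x y z, Num.min (mu x y) (mu y z) <= mu x z).

Definition fle (E : Type) (mu : E -> E -> R) (x y : E) : Prop := mu x y > 2^-1.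

Definition fuzzy_ordered_linear_space (E : lmodType R) (mu : E -> E -> R) : Prop :=
  fuzzy_order mu /\
  (forall x1 x2 x, fle mu x1 x2 -> mu x1 x2 <= mu (x1 + x) (x2 + x)) /\
  (forall x1 x2 (a : R), fle mu x1 x2 -> 0 < a -> mu x1 x2 <= mu (a *: x1) (a *: x2)).

Definition is_sup_in (E : Type) (mu : E -> E -> R) (S : E -> Prop) (x y s : E) : Prop :=
  S s /\ fle mu x s /\ fle mu y s /\
  (forall u, S u -> fle mu x u -> fle mu y u -> fle mu s u).

Definition is_inf_in (E : Type) (mu : E -> E -> R) (S : E -> Prop) (x y s : E) : Prop :=
  S s /\ fle mu s x /\ fle mu s y /\
  (forall u, S u -> fle mu u x -> fle mu u y -> fle mu u s).

Definition fuzzy_riesz_space (E : lmodType R) (mu : E -> E -> R) : Prop :=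
  fuzzy_ordered_linear_space mu /\
  (forall x y : E, exists s, is_sup_in mu (fun _ => True) x y s) /\
  (forall x y : E, exists s, is_inf_in mu (fun _ => True) x y s).

(* T (x \/ y) = T x \/ T y, with sups uniquely determined *)
Definition fuzzy_riesz_hom (E F : lmodType R) (mu : E -> E -> R) (nu : F -> F -> R)
  (T : {linear E -> F}) : Prop :=
  forall x y s, is_sup_in mu (fun _ => True) x y s ->
    is_sup_in nu (fun _ => True) (T x) (T y) (T s).

Definition vsubspace (E : lmodType R) (A : E -> Prop) : Prop :=
  A 0 /\ (forall x y, A x -> A y -> A (x + y)) /\ (forall (a : R) x, A x -> A (a *: x)).

(* A is fuzzy solid in the subspace S (with the restricted fuzzy order):
   |x| = x \/ (-x) computed in S. *)
Definition fuzzy_solid_in (E : lmodType R) (mu : E -> E -> R) (S A : E -> Prop) : Prop :=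
  forall x y ax ay, S x -> S y ->
    is_sup_in mu S x (- x) ax -> is_sup_in mu S y (- y) ay ->
    fle mu ax ay -> A y -> A x.

Definition fuzzy_ideal_in (E : lmodType R) (mu : E -> E -> R) (S A : E -> Prop) : Prop :=
  (forall x, A x -> S x) /\ vsubspace A /\ fuzzy_solid_in mu S A.

Definition fuzzy_ideal (E : lmodType R) (mu : E -> E -> R) (A : E -> Prop) : Prop :=
  fuzzy_ideal_in mu (fun _ => True) A.

End FuzzyDefs.

From HB Require Import structures.
From mathcomp Require Import all_boot all_order all_algebra.
From mathcomp Require Import reals.

Set Implicit Arguments.
Unset Strict Implicit.
Unset Printing Implicit Defensive.
Import Order.TTheory GRing.Theory Num.Theory.
Local Open Scope ring_scope.

(* A fuzzy Riesz homomorphism T is monotone, because x <= y makes y the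
   supremum of {x, y}, and it commutes with the modulus, because
   |x| = x \/ (-x) and T is linear.  Hence |x| <= |y| in E gives
   |Tx| <= |Ty| in T(E) (or in any subspace containing T(E)), so solidity
   of B passes to T^-1(B); linearity of T does the rest. *)

Lemma invr2_lt1 (R : realType) : (2^-1 : R) < 1.
Proof. by rewrite invf_lt1 // ltr1n. Qed.

Section Preimage.
Variables (R : realType) (E F : lmodType R).
Variables (mu : E -> E -> R) (nu : F -> F -> R) (T : {linear E -> F}).

Lemma fle_refl : fuzzy_order mu -> forall x, fle mu x x.
Proof. by move=> [_ [refl _]] x; rewrite /fle refl invr2_lt1. Qed.

Lemma is_sup_in_fle x y :
  fuzzy_order mu -> fle mu x y -> is_sup_in mu (fun _ => True) x y y.
Proof. by move=> fo xy; split=> //; split=> //; split; [exact: fle_refl | by []]. Qed.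

Lemma is_sup_in_sub (S : F -> Prop) a b s :
  S s -> is_sup_in nu (fun _ => True) a b s -> is_sup_in nu S a b s.
Proof. by move=> Ss [_ [xs [ys sl]]]; split=> //; split=> //; split=> // u _; exact: sl. Qed.

Hypothesis homT : fuzzy_riesz_hom mu nu T.

Lemma riesz_hom_fle x y :
  fuzzy_order mu -> fle mu x y -> fle nu (T x) (T y).
Proof. by move=> fo xy; have [_ [] ] := homT (is_sup_in_fle fo xy). Qed.

Lemma riesz_hom_abs x a :
  is_sup_in mu (fun _ => True) x (- x) a ->
  is_sup_in nu (fun _ => True) (T x) (- T x) (T a).
Proof. by move=> /homT; rewrite linearN. Qed.

Lemma vsubspace_preim (B : F -> Prop) :
  vsubspace B -> vsubspace (fun x => B (T x)).
Proof.
move=> [B0 [BD BZ]]; split; first by rewrite linear0.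
by split=> [x y Bx By | a x Bx]; [rewrite linearD; apply: BD | rewrite linearZ; apply: BZ].
Qed.

Lemma fuzzy_solid_preim (S B : F -> Prop) :
  fuzzy_order mu -> (forall x, S (T x)) -> fuzzy_solid_in nu S B ->
  fuzzy_solid_in mu (fun _ => True) (fun x => B (T x)).
Proof.
move=> fo ST solidB x y ax ay _ _ ax_abs ay_abs axy; apply: (solidB _ _ (T ax) (T ay)) => //.
- exact/is_sup_in_sub/riesz_hom_abs.
- exact/is_sup_in_sub/riesz_hom_abs.
- exact: riesz_hom_fle.
Qed.

Lemma fuzzy_ideal_preim (S B : F -> Prop) :
  fuzzy_order mu -> (forall x, S (T x)) -> fuzzy_ideal_in nu S B ->
  fuzzy_ideal mu (fun x => B (T x)).
Proof.
move=> fo ST [_ [subspaceB solidB]]; split=> //; split.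
- exact: vsubspace_preim subspaceB.
- exact: fuzzy_solid_preim solidB.
Qed.

End Preimage.

Theorem theorem2p5 (R : realType) (E F : lmodType R)
  (mu : E -> E -> R) (nu : F -> F -> R) (T : {linear E -> F}) :
  fuzzy_riesz_space mu -> fuzzy_riesz_space nu -> fuzzy_riesz_hom mu nu T ->
  (forall B : F -> Prop,
     fuzzy_ideal_in nu (fun z => exists x, z = T x) B ->
     fuzzy_ideal mu (fun x => B (T x))) /\
  (forall B1 : F -> Prop,
     fuzzy_ideal nu B1 -> fuzzy_ideal mu (fun x => B1 (T x))).
Proof.
move=> [[fo _] _] _ homT; split=> B idealB.
- by apply: (fuzzy_ideal_preim homT fo _ idealB) => x; exists x.
- exact: (fuzzy_ideal_preim homT fo (fun=> I) idealB).
Qed.
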